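(* Let $(X,T)$ be a minimal dendric subshift over the finite alphabet $\mathcal{A}$. Let $$H=\Big\{\sum_{a\in\mathcal{A}}\sum_{k\in K_a}\alpha(a,k)\,\chi_{T^k([a])}\ :\ K_a\subseteq\mathbb{Z}\text{ finite},\ \alpha(a,k)\in\mathbb{Z}\Big\}\subseteq C(X,\mathbb{Z}).$$ Then for every $v\in\mathcal{L}(X)$, the characteristic function $\chi_{[v]}$ belongs to $H$.
   Context: $T$ is the shift on $\mathcal{A}^{\mathbb Z}$, $(X,T)$ a subshift (closed shift-invariant subset), minimal if it has no nonempty proper closed invariant subset. $\mathcal{L}(X)$ is the set of finite factors of elements of $X$. For $w\in\mathcal{L}(X)$ let $L(w)=\{a: aw\in\mathcal{L}(X)\}$, $R(w)=\{b: wb\in\mathcal{L}(X)\}$, $E(w)=\{(a,b): awb\in\mathcal{L}(X)\}$; the extension graph of $w$ is the bipartite graph on the disjoint union of $L(w)$ and $R(w)$ with edge set $E(w)$. A minimal subshift is dendric if every extension graph (including that of the empty word) is a tree. For a word $v$, $[v]=\{x\in X: x_0\cdots x_{|v|-1}=v\}$; $\chi_A$ denotes the characteristic function of $A\subseteq X$. *)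

From Stdlib Require Import ClassicalEpsilon.
From mathcomp Require Import all_boot all_order all_algebra.
Set Implicit Arguments. Unset Strict Implicit. Unset Printing Implicit Defensive.
Import Order.TTheory GRing.Theory Num.Theory.
Local Open Scope ring_scope.

Definition config (A : Type) := int -> A.

Definition shift (A : Type) (x : config A) : config A := fun n => x (n + 1).
Definition shiftn (A : Type) (k : int) (x : config A) : config A :=
  fun n => x (n + k).

(* Closedness in the product topology on A^Z (A discrete, finite):
   x is in X as soon as every central window of x is seen in some point of X. *)
Definition closed_cfg (A : Type) (X : config A -> Prop) : Prop :=
  forall x : config A,
    (forall n : nat, exists y, X y /\ forall i : int, - (n%:Z) <= i <= n%:Z -> y i = x i) ->
    X x.

Definition shift_invariant (A : Type) (X : config A -> Prop) : Prop :=
  forall x, X x <-> X (shift x).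

Definition subshift (A : Type) (X : config A -> Prop) : Prop :=
  closed_cfg X /\ shift_invariant X.

Definition minimal_subshift (A : Type) (X : config A -> Prop) : Prop :=
  subshift X /\ (exists x, X x) /\
  forall Y : config A -> Prop,
    (forall x, Y x -> X x) -> closed_cfg Y -> shift_invariant Y ->
    (exists x, Y x) -> forall x, X x -> Y x.

Definition occurs_at (A : eqType) (w : seq A) (x : config A) (i : int) : Prop :=
  forall j : nat, (j < size w)%N -> x (i + j%:Z) = nth (x i) w j.

Definition pbool (P : Prop) : bool :=
  if excluded_middle_informative P then true else false.

Definition language (A : eqType) (X : config A -> Prop) (w : seq A) : Prop :=
  exists x, X x /\ exists i, occurs_at w x i.

(* Extension graph of w: bipartite graph on L(w) (left copy, inl) and
   R(w) (right copy, inr), with edge set E(w) = {(a,b) : a w b in L(X)}. *)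
Definition ext_vertex (A : finType) (X : config A -> Prop) (w : seq A)
  (v : A + A) : Prop :=
  match v with
  | inl a => language X (a :: w)
  | inr b => language X (rcons w b)
  end.

Definition ext_edge (A : finType) (X : config A -> Prop) (w : seq A) : rel (A + A) :=
  fun u v =>
    match u, v with
    | inl a, inr b => pbool (language X (a :: rcons w b))
    | inr b, inl a => pbool (language X (a :: rcons w b))
    | _, _ => false
    end.

(* A finite graph (vertex predicate V, symmetric edge relation e whose edges
   only join vertices of V) is a tree if it is connected and has no cycle. *)
Definition is_tree (T : finType) (V : T -> Prop) (e : rel T) : Prop :=
  (forall u v, V u -> V v -> connect e u v) /\
  (forall c : seq T, ucycle e c -> (size c < 3)%N).

Definition extension_graph_is_tree (A : finType) (X : config A -> Prop)
  (w : seq A) : Prop :=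
  is_tree (ext_vertex X w) (ext_edge X w).

Definition dendric (A : finType) (X : config A -> Prop) : Prop :=
  minimal_subshift X /\
  forall w, language X w -> extension_graph_is_tree X w.

Definition cylinder (A : finType) (X : config A -> Prop) (v : seq A)
  (x : config A) : Prop :=
  X x /\ occurs_at v x 0.

Definition shifted_letter_cyl (A : finType) (X : config A -> Prop) (k : int) (a : A)
  (x : config A) : Prop :=
  exists y, cylinder X [:: a] y /\ x = shiftn k y.

Definition chi (A : Type) (S : config A -> Prop) (x : config A) : int :=
  if excluded_middle_informative (S x) then 1 else 0.

(* The group H of finite integer combinations of chi_{T^k([a])},
   as functions on X (elements of C(X, Z) are compared on X). *)
Definition in_H (A : finType) (X : config A -> Prop) (f : config A -> int) : Prop :=
  exists (K : A -> seq int) (alpha : A -> int -> int),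
    forall x, X x ->
      f x = \sum_(a : A) \sum_(k <- K a) alpha a k * chi (shifted_letter_cyl X k a) x.

(** By induction on [|v|], [chi[v]] is an integer combination of the maps
    [x |-> [x_j = a]], which are the [chi (T^(-j) [a])]. For [v = a w b], the
    extension graph of [w] is acyclic, so [(a, b)] is a bridge; let [C] be the
    component of [a] once that edge is removed. A point carrying [w] at
    position 1, preceded by [a'] and followed by [b'], uses the edge [(a', b')],
    whose two ends lie on the same side of [C] unless [(a', b') = (a, b)].
    Hence [chi[a w b] = sum_(c in C) chi[c w] - sum_(c in C) chi(T^(-1) [w c])]. *)
From mathcomp Require Import all_boot all_order all_algebra.
From Stdlib Require Import FunctionalExtensionality ClassicalEpsilon.
From mathcomp Require Import zify.
Set Implicit Arguments. Unset Strict Implicit. Unset Printing Implicit Defensive.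
Import Order.TTheory GRing.Theory Num.Theory.
Local Open Scope ring_scope.

Lemma sum_eq_indicator (R : pzSemiRingType) (I : finType) (P : pred I) (y : I) :
  \sum_(c | P c) (y == c)%:R = (P y)%:R :> R.
Proof.
rewrite big_mkcond (bigD1 y) //= eqxx big1 ?addr0; first by case: (P y).
by move=> c /negbTE; rewrite eq_sym => ->; case: (P c).
Qed.

Lemma sum_group_by (R : nmodType) (I J : eqType) (r : seq I) (h : I -> J) (F : I -> R) :
  \sum_(i <- r) F i = \sum_(j <- undup (map h r)) \sum_(i <- r | h i == j) F i.
Proof.
rewrite [RHS](exchange_big_dep xpredT) //=; apply: eq_big_seq => i ri.
rewrite (eq_bigl (pred1 (h i))) => [|j]; last by rewrite eq_sym.
by rewrite -big_filter filter_pred1_uniq ?undup_uniq ?mem_undup ?map_f // big_seq1.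
Qed.

Section RemoveEdge.

Variables (T : finType) (e : rel T).

Definition remove_edge (u v : T) : rel T :=
  fun s t => e s t && ((s, t) \notin [:: (u, v); (v, u)]).

Lemma connect_remove_edge u v s t :
  e s t -> e t s -> (s, t) \notin [:: (u, v); (v, u)] ->
  connect (remove_edge u v) u s = connect (remove_edge u v) u t.
Proof.
move=> est ets st_uv.
have ts_uv : (t, s) \notin [:: (u, v); (v, u)].
  by apply: contra st_uv; rewrite !inE !xpair_eqE => /orP[] /andP[-> ->]; rewrite ?orbT.
apply/idP/idP => /connect_trans; apply; apply: connect1; apply/andP; split=> //.
Qed.

Hypothesis e_acyclic : forall c, ucycle e c -> (size c < 3)%N.

Lemma remove_edge_bridge u v :
  e u v -> e v u -> u != v -> ~~ connect (remove_edge u v) u v.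
Proof.
move=> euv evu neq_uv; apply/negP => /connectP [q path_q last_q].
case/shortenP: path_q last_q => p path_p uniq_p _ last_p.
have path_e : path e u p by apply: sub_path path_p => s t /andP[].
have ucycle_up : ucycle e (u :: p).
  by rewrite /ucycle uniq_p andbT /= rcons_path path_e -last_p evu.
move: (e_acyclic ucycle_up) path_p last_p.
case: p {path_e uniq_p ucycle_up} => [|y [|z r]] // _.
- by move=> _ /= eq_uv; rewrite eq_uv eqxx in neq_uv.
- by move=> /andP[/andP[_ not_uv] _] /= vy; rewrite -vy !inE eqxx in not_uv.
Qed.

End RemoveEdge.

Lemma shiftnD (A : Type) (j k : int) (x : config A) :
  shiftn j (shiftn k x) = shiftn (j + k) x.
Proof. by apply: functional_extensionality => n; rewrite /shiftn addrA. Qed.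

Lemma shiftn0 (A : Type) (x : config A) : shiftn 0 x = x.
Proof. by apply: functional_extensionality => n; rewrite /shiftn addr0. Qed.

Section ShiftInvariant.

Variables (A : Type) (X : config A -> Prop).
Hypothesis X_inv : shift_invariant X.

Lemma shiftn_nat_invariant (n : nat) x : X x <-> X (shiftn n x).
Proof.
elim: n x => [|n IHn] x; first by rewrite shiftn0.
have -> : shiftn n.+1 x = shift (shiftn n x).
  by apply: functional_extensionality => m; rewrite /shift /shiftn; congr x; lia.
by rewrite -X_inv.
Qed.

Lemma shiftn_invariant k x : X x -> X (shiftn k x).
Proof.
case: k => n Xx; first exact: (shiftn_nat_invariant n x).1.
rewrite (shiftn_nat_invariant n.+1 (shiftn _ x)) shiftnD NegzE.
by rewrite -[m in shiftn m _]/(n.+1%:Z - n.+1%:Z) subrr shiftn0.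
Qed.

End ShiftInvariant.

Section CoordinateSpan.

Variables (A : finType) (X : config A -> Prop).

Definition letter_at (j : int) (a : A) (x : config A) : int := (x j == a)%:R.

Definition coord_span (f : config A -> int) : Prop :=
  exists l : seq (int * int * A), forall x, X x ->
    f x = \sum_(t <- l) t.1.1 * letter_at t.1.2 t.2 x.

Lemma coord_span_ext f g :
  coord_span f -> (forall x, X x -> g x = f x) -> coord_span g.
Proof. by move=> [l fl] gf; exists l => x Xx; rewrite gf // fl. Qed.

Lemma coord_span0 : coord_span (fun _ => 0).
Proof. by exists [::] => x _; rewrite big_nil. Qed.

Lemma coord_spanD f g :
  coord_span f -> coord_span g -> coord_span (fun x => f x + g x).
Proof. by move=> [l fl] [m gm]; exists (l ++ m) => x Xx; rewrite big_cat fl ?gm. Qed.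

Lemma coord_spanZ c f : coord_span f -> coord_span (fun x => c * f x).
Proof.
move=> [l fl]; exists [seq (c * t.1.1, t.1.2, t.2) | t <- l] => x Xx.
by rewrite big_map fl // mulr_sumr; apply: eq_bigr => t _; rewrite mulrA.
Qed.

Lemma coord_spanB f g :
  coord_span f -> coord_span g -> coord_span (fun x => f x - g x).
Proof.
move=> span_f /(coord_spanZ (-1)) span_g.
by apply: (coord_span_ext (coord_spanD span_f span_g)) => x _; rewrite mulN1r.
Qed.

Lemma coord_span_sum (I : Type) (r : seq I) (P : pred I) (F : I -> config A -> int) :
  (forall i, coord_span (F i)) -> coord_span (fun x => \sum_(i <- r | P i) F i x).
Proof.
move=> span_F; elim: r => [|i r IHr].
  by apply: (coord_span_ext coord_span0) => x _; rewrite big_nil.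
case Pi: (P i).
  by apply: (coord_span_ext (coord_spanD (span_F i) IHr)) => x _; rewrite big_cons Pi.
by apply: (coord_span_ext IHr) => x _; rewrite big_cons Pi.
Qed.

Lemma coord_span_letter j a : coord_span (letter_at j a).
Proof. by exists [:: (1, j, a)] => x _; rewrite big_seq1 mul1r. Qed.

Lemma coord_span1 : coord_span (fun _ => 1).
Proof.
apply: (coord_span_ext (coord_span_sum (index_enum A) predT (coord_span_letter 0))).
by move=> x _; rewrite sum_eq_indicator.
Qed.

Lemma chi_shifted_letter_cyl k a x : shift_invariant X -> X x ->
  chi (shifted_letter_cyl X k a) x = letter_at (- k) a x.
Proof.
move=> X_inv Xx; rewrite /chi /letter_at.
case: excluded_middle_informative => [[y [[_ y0] xy]] | not_cyl] /=.
  by rewrite xy; have := y0 0%N isT; rewrite /shiftn addr0 addNr => ->; rewrite eqxx.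
case: eqP => // xk; case: not_cyl; exists (shiftn (- k) x).
split; last by rewrite shiftnD subrr shiftn0.
split; first exact: shiftn_invariant.
by case=> // _; rewrite /shiftn add0r xk.
Qed.

Lemma in_H_coord_span f : shift_invariant X -> coord_span f -> in_H X f.
Proof.
move=> X_inv [l fl].
pose l_ a := [seq t <- l | t.2 == a].
pose K a := undup [seq - t.1.2 | t <- l_ a].
pose alpha a k := \sum_(t <- l_ a | - t.1.2 == k) t.1.1.
exists K, alpha => x Xx; rewrite fl // (partition_big (fun t => t.2) xpredT) //=.
apply: eq_bigr => a _; rewrite -big_filter (sum_group_by _ (fun t => - t.1.2)).
apply: eq_bigr => k _; rewrite chi_shifted_letter_cyl // mulr_suml.
rewrite big_seq_cond [RHS]big_seq_cond; apply: eq_bigr => t /andP[].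
by rewrite mem_filter => /andP[/eqP <- _] /eqP <-; rewrite opprK.
Qed.

End CoordinateSpan.

Fixpoint occursb (A : eqType) (v : seq A) (x : config A) (p : int) : bool :=
  if v is a :: v' then (x p == a) && occursb v' x (p + 1) else true.

Lemma occursbP (A : eqType) (v : seq A) x p :
  reflect (occurs_at v x p) (occursb v x p).
Proof.
apply: (iffP idP).
  elim: v p => [|a v IHv] p //= /andP[/eqP xp /IHv occ] [|j] /=.
    by rewrite addr0.
  rewrite ltnS => lt_jv; rewrite (set_nth_default (x (p + 1))) // -occ //.
  by congr x; lia.
elim: v p => [|a v IHv] p //= occ; apply/andP; split.
  by have := occ 0%N isT; rewrite addr0 => ->.
apply/IHv => j lt_jv; have /= := occ j.+1 lt_jv.
by rewrite (set_nth_default (x p)) // => <-; congr x; lia.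
Qed.

Lemma occursb_rcons (A : eqType) (v : seq A) b x p :
  occursb (rcons v b) x p = occursb v x p && (x (p + (size v)%:Z) == b).
Proof.
elim: v p => [|a v IHv] p /=; first by rewrite addr0 andbT.
by rewrite IHv andbA; congr (_ && (x _ == b)); lia.
Qed.

Section Decomposition.

Variables (A : finType) (X : config A -> Prop).

Lemma language_occursb v x p : X x -> occursb v x p -> language X v.
Proof. by move=> Xx /occursbP occ; exists x; split; last exists p. Qed.

Lemma language_inner a w b : language X (a :: rcons w b) -> language X w.
Proof.
case=> x [Xx [p /occursbP /= /andP[_]]].
by rewrite occursb_rcons => /andP[/(language_occursb Xx)].
Qed.

Lemma ext_edge_language a w b :
  language X (a :: rcons w b) -> ext_edge X w (inl a) (inr b).
Proof. by rewrite /= /pbool; case: excluded_middle_informative. Qed.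

Lemma chi_cylinder v x : X x -> chi (cylinder X v) x = (occursb v x 0)%:R.
Proof.
move=> Xx; rewrite /chi; case: excluded_middle_informative => [[_ /occursbP ->] // | not_cyl].
by case: occursbP => // occ; case: not_cyl.
Qed.

Hypothesis ext_graph_acyclic :
  forall w, language X w -> forall c, ucycle (ext_edge X w) c -> (size c < 3)%N.

Lemma occursb_cons_rcons_decomposition a w b : language X (a :: rcons w b) ->
  exists L R : pred A, forall x p, X x ->
    (occursb (a :: rcons w b) x p)%:R =
      \sum_(c | L c) (occursb (c :: w) x p)%:R
      - \sum_(c | R c) (occursb (rcons w c) x (p + 1))%:R :> int.
Proof.
move=> awb_in; have acyclic_w := ext_graph_acyclic (language_inner awb_in).
pose C := connect (remove_edge (ext_edge X w) (inl a) (inr b)) (inl a).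
exists (fun c => C (inl c)), (fun c => C (inr c)) => x p Xx.
rewrite /= occursb_rcons.
have [occ_w | /negbTE no_w] := boolP (occursb w x (p + 1)); last first.
  rewrite andbF big1 => [|c _]; last by rewrite andbF.
  by rewrite big1 ?subr0 // => c _; rewrite occursb_rcons no_w.
under eq_bigr => c _ do rewrite andbT.
under [S in _ - S]eq_bigr => c _ do rewrite occursb_rcons occ_w.
rewrite /= !sum_eq_indicator.
set a' := x p; set b' := x (p + 1 + (size w)%:Z).
have e_ab' : ext_edge X w (inl a') (inr b').
  apply/ext_edge_language/(language_occursb (p := p) Xx).
  by rewrite /= occursb_rcons occ_w !eqxx.
have [[-> ->] | ne_ab] := eqVneq (a', b') (a, b).
  have e_ab := ext_edge_language awb_in.
  by rewrite !eqxx /C connect0 (negbTE (remove_edge_bridge acyclic_w e_ab e_ab _)).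
rewrite /C (connect_remove_edge e_ab' e_ab') ?subrr.
  by rewrite -xpair_eqE (negbTE ne_ab).
by rewrite !inE !xpair_eqE /= orbF -xpair_eqE.
Qed.

Lemma coord_span_occursb v p : coord_span X (fun x => (occursb v x p)%:R).
Proof.
have [n] := ubnP (size v); elim: n v p => // n IHn [|a v] p lt_vn.
  exact: coord_span1.
case/lastP: v lt_vn => [|w b] lt_vn.
  by apply: (coord_span_ext (coord_span_letter X p a)) => x _ /=; rewrite andbT.
have [awb_in | awb_notin] := classic (language X (a :: rcons w b)); last first.
  apply: (coord_span_ext (coord_span0 X)) => x Xx.
  by case: (boolP (occursb _ x p)) => // /(language_occursb Xx) /awb_notin.
have [L [R decomp]] := occursb_cons_rcons_decomposition awb_in.
apply: (coord_span_ext _ (fun x Xx => decomp x p Xx)).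
rewrite /= size_rcons in lt_vn.
by apply: coord_spanB; apply: coord_span_sum => c; apply: IHn; rewrite /= ?size_rcons; lia.
Qed.

End Decomposition.

Theorem lemma3p3 (A : finType) (X : config A -> Prop) :
  dendric X ->
  forall v : seq A, language X v -> in_H X (chi (cylinder X v)).
Proof.
move=> [[[_ X_inv] _] X_tree] v _.
have acyclic w : language X w -> forall c, ucycle (ext_edge X w) c -> (size c < 3)%N.
  by move=> /X_tree [].
apply: in_H_coord_span X_inv _.
apply: (coord_span_ext (coord_span_occursb acyclic v 0)) => x Xx.
exact: chi_cylinder.
Qed.
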